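(* The sequence $(C_n)_{n\ge1}$ is strictly increasing.
   Context: For $n\ge1$ and $\mathbf{x}=(x_1,\dots,x_n)\in(0,\infty)^n$ let $f_n(\mathbf{x})=\sum_{i=1}^n x_i+\sum_{1\le i\le j\le n}\prod_{k=i}^j \frac1{x_k}$, $A_n=\inf_{\mathbf{x}\in(0,\infty)^n} f_n(\mathbf{x})$, and $C_n=3n-A_n$. *)

From HB Require Import structures.
From mathcomp Require Import all_boot all_order all_algebra.
From mathcomp Require Import classical_sets reals.
Set Implicit Arguments. Unset Strict Implicit. Unset Printing Implicit Defensive.
Import Order.TTheory GRing.Theory Num.Theory.
Local Open Scope ring_scope.
Local Open Scope classical_set_scope.

(* Indices are 0-based: x : 'I_n -> R stands for (x_1,...,x_n). *)
Definition f (R : realType) (n : nat) (x : 'I_n -> R) : R :=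
  \sum_(i < n) x i +
  \sum_(i < n) \sum_(j < n | (i <= j)%N)
     \prod_(k < n | (i <= k <= j)%N) (x k)^-1.

Definition A (R : realType) (n : nat) : R :=
  inf [set f x | x in [set x : 'I_n -> R | forall i, 0 < x i]].

Definition C (R : realType) (n : nat) : R := 3 * n%:R - A R n.

From HB Require Import structures.
From mathcomp Require Import all_boot all_order all_algebra.
From mathcomp Require Import classical_sets reals topology normedtype derive.
From mathcomp Require Import ring lra zify.
Set Implicit Arguments. Unset Strict Implicit. Unset Printing Implicit Defensive.
Import Order.TTheory GRing.Theory Num.Theory.
Import numFieldNormedType.Exports.
Local Open Scope ring_scope.

(* Read f_n as a function of the finite sequence s = (x_1, ..., x_n). Cutting s
   into l ++ t :: r gives f(l ++ t :: r) = f(l) + f(r) + t + (1 + S(l)) (1 + P(r)) / t,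
   where S(l) sums the products of the 1/x_k over the final segments of l and P(r)
   over the initial segments of r. Hence at a minimiser every coordinate satisfies
   t^2 = (1 + S(l)) (1 + P(r)).  Since f_n is a sum of monomials, the Cauchy-Schwarz
   inequality gives f(sqrt(x y))^2 <= f(x) f(y); applied to a minimiser x and its
   reversal this produces a palindromic minimiser.  For a palindromic minimiser with
   left half l and a = S(l), inserting one coordinate in the middle costs
   3 - (a - 1)^2 (even length) or 3 - (a - 1)^2 / (2 (a + 3)) (odd length), and a = 1
   is impossible: walking the stationarity equations leftwards would force S = 1 on
   the empty sequence.  So A_(n+1) < A_n + 3.  Minimisers exist because f_n dominates
   every x_i and 1/x_i, so it is coercive on (0, oo)^n. *)

Section SeqAlgebra.
Variable R : fieldType.
Implicit Types (l r s : seq R) (a t : R).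

(* For s = (x_1, ..., x_n): prefix_sum s = sum_j prod_(k <= j) 1/x_k,
   suffix_sum s = sum_i prod_(k >= i) 1/x_k, interval_sum s = sum_(i <= j) prod_(k=i..j) 1/x_k,
   so fseq s is f_n(x) (lemma fE below). *)
Definition invprod s := \prod_(a <- s) a^-1.
Arguments invprod : simpl never.
Fixpoint prefix_sum s := if s is a :: l then a^-1 * (1 + prefix_sum l) else 0.
Fixpoint suffix_sum s := if s is a :: l then suffix_sum l + a^-1 * invprod l else 0.
Fixpoint interval_sum s := if s is a :: l then prefix_sum s + interval_sum l else 0.
Definition fseq s := \sum_(a <- s) a + interval_sum s.

Lemma invprod_nil : invprod [::] = 1.
Proof. exact: big_nil. Qed.

Lemma invprod_cons a s : invprod (a :: s) = a^-1 * invprod s.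
Proof. exact: big_cons. Qed.

Lemma invprod_cat l r : invprod (l ++ r) = invprod l * invprod r.
Proof. exact: big_cat. Qed.

Lemma prefix_sum_cat l r :
  prefix_sum (l ++ r) = prefix_sum l + invprod l * prefix_sum r.
Proof.
elim: l => [|a l IH] /=; first by rewrite invprod_nil add0r mul1r.
rewrite IH invprod_cons; ring.
Qed.

Lemma suffix_sum_cat l r :
  suffix_sum (l ++ r) = suffix_sum r + invprod r * suffix_sum l.
Proof.
elim: l => [|a l IH] /=; first by rewrite mulr0 addr0.
rewrite IH invprod_cat; ring.
Qed.

Lemma interval_sum_cat l r :
  interval_sum (l ++ r) = interval_sum l + interval_sum r + suffix_sum l * prefix_sum r.
Proof.
elim: l => [|a l IH] /=; first by rewrite add0r mul0r addr0.
rewrite IH prefix_sum_cat; ring.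
Qed.

Lemma fseq_cat l r :
  fseq (l ++ r) = fseq l + fseq r + suffix_sum l * prefix_sum r.
Proof. rewrite /fseq big_cat interval_sum_cat /=; ring. Qed.

Lemma fseq_insert l t r :
  fseq (l ++ t :: r) = fseq l + fseq r + t + (1 + suffix_sum l) * (1 + prefix_sum r) / t.
Proof. rewrite fseq_cat (fseq_cat [:: t]) /fseq big_seq1 /= invprod_nil; ring. Qed.

Lemma invprod_rev s : invprod (rev s) = invprod s.
Proof. exact: big_rev. Qed.

Lemma prefix_sum_rev s : prefix_sum (rev s) = suffix_sum s.
Proof.
elim: s => [|a s IH] //=.
by rewrite rev_cons -cats1 prefix_sum_cat IH invprod_rev /=; ring.
Qed.

Lemma suffix_sum_rev s : suffix_sum (rev s) = prefix_sum s.
Proof. by rewrite -{2}(revK s) prefix_sum_rev. Qed.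

Lemma interval_sum_rev s : interval_sum (rev s) = interval_sum s.
Proof.
elim: s => [|a s IH] //=.
by rewrite rev_cons -cats1 interval_sum_cat IH suffix_sum_rev /=; ring.
Qed.

Lemma fseq_rev s : fseq (rev s) = fseq s.
Proof. by rewrite /fseq interval_sum_rev big_rev. Qed.

End SeqAlgebra.

Section SeqPositive.
Variable R : realFieldType.
Implicit Types (l r s : seq R) (a : R).

Definition posseq s := all (fun a => 0 < a) s.

Lemma posseq_cat l r : posseq (l ++ r) = posseq l && posseq r.
Proof. exact: all_cat. Qed.

Lemma posseq_rev s : posseq (rev s) = posseq s.
Proof. exact: all_rev. Qed.

Lemma prefix_sum_ge0 s : posseq s -> 0 <= prefix_sum s.
Proof.
elim: s => [|a s IH] //= /andP[a_gt0 /IH ?].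
by rewrite mulr_ge0 ?addr_ge0 // invr_ge0 ltW.
Qed.

Lemma suffix_sum_ge0 s : posseq s -> 0 <= suffix_sum s.
Proof. by rewrite -prefix_sum_rev -posseq_rev; apply: prefix_sum_ge0. Qed.

Lemma interval_sum_ge0 s : posseq s -> 0 <= interval_sum s.
Proof.
elim: s => [|a s IH] // s_pos; have := prefix_sum_ge0 s_pos.
by case/andP: s_pos => _ /IH ? ?; apply: addr_ge0.
Qed.

Lemma fseq_ge0 s : posseq s -> 0 <= fseq s.
Proof.
move=> s_pos; rewrite /fseq addr_ge0 ?interval_sum_ge0 // big_seq sumr_ge0 // => a.
by move/allP: s_pos => /[apply] /ltW.
Qed.

Lemma mem_le_fseq s a : posseq s -> a \in s -> a <= fseq s /\ a^-1 <= fseq s.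
Proof.
move=> s_pos a_in; move: s_pos; case/splitPr: a_in => l r.
rewrite posseq_cat /= => /and3P[l_pos a_gt0 r_pos].
have := fseq_ge0 l_pos; have := fseq_ge0 r_pos.
have := suffix_sum_ge0 l_pos; have := prefix_sum_ge0 r_pos.
rewrite fseq_insert; set L := suffix_sum l; set P := prefix_sum r => P_ge0 L_ge0 ? ?.
have LP_ge1 : 1 <= (1 + L) * (1 + P) by nra.
have : a^-1 <= (1 + L) * (1 + P) / a by rewrite mulrC ler_pMr // invr_gt0.
have : 0 <= (1 + L) * (1 + P) / a by apply: divr_ge0; [lra | exact: ltW].
by split; lra.
Qed.

Lemma fseq_insert_middle l : posseq l ->
  let a := suffix_sum l in
  fseq (l ++ (1 + a) :: rev l) = fseq (l ++ rev l) + 3 - (a - 1) ^+ 2.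
Proof.
move=> /suffix_sum_ge0 a_ge0 a; rewrite fseq_insert fseq_cat prefix_sum_rev -/a.
by field; rewrite gt_eqF // ltr_pwDl.
Qed.

(* (a + 3) / 2 is the AM-GM upper bound of the optimal inserted value sqrt (2 (1 + a)). *)
Lemma fseq_insert_after_middle l : posseq l ->
  let a := suffix_sum l in
  fseq (l ++ (1 + a) :: (a + 3) / 2 :: rev l) =
  fseq (l ++ (1 + a) :: rev l) + 3 - (a - 1) ^+ 2 / (2 * (a + 3)).
Proof.
move=> /suffix_sum_ge0 a_ge0 a.
have c_neq0 : 1 + a != 0 by rewrite gt_eqF // ltr_pwDl.
have a3_neq0 : a + 3 != 0 by rewrite gt_eqF // ltr_wpDl.
have suffix1 : suffix_sum (rcons l (1 + a)) = 1.
  by rewrite -cats1 suffix_sum_cat /= invprod_cons !invprod_nil -/a; field.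
rewrite -cat_rcons fseq_insert -cat_rcons fseq_cat suffix1 prefix_sum_rev -/a.
by field; rewrite a3_neq0.
Qed.

End SeqPositive.

Section GeometricMean.
Variable R : realFieldType.
Implicit Types (u p q : R) (m : seq R).

Definition below_gmean u p q := [/\ 0 <= u, 0 <= p, 0 <= q & u ^+ 2 <= p * q].

Lemma eq_below_gmean u p q : 0 < u -> 0 < p -> 0 < q -> u ^+ 2 = p * q ->
  below_gmean u p q.
Proof. by move=> ? ? ? upq; split; [exact: ltW | exact: ltW | exact: ltW | rewrite upq]. Qed.

Lemma below_gmean0 : below_gmean 0 0 0.
Proof. by split; rewrite // expr0n mulr0. Qed.

Lemma below_gmean1 : below_gmean 1 1 1.
Proof. by apply: eq_below_gmean; rewrite // expr1n mulr1. Qed.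

Lemma below_gmeanD u1 p1 q1 u2 p2 q2 :
  below_gmean u1 p1 q1 -> below_gmean u2 p2 q2 ->
  below_gmean (u1 + u2) (p1 + p2) (q1 + q2).
Proof.
move=> [u1_ge0 p1_ge0 q1_ge0 le1] [u2_ge0 p2_ge0 q2_ge0 le2].
split; rewrite ?addr_ge0 //.
have cross : 2 * u1 * u2 <= p1 * q2 + p2 * q1.
  have uu : (u1 * u2) ^+ 2 <= (p1 * q1) * (p2 * q2) by rewrite exprMn ler_pM ?sqr_ge0.
  have amgm := sqr_ge0 (p1 * q2 - p2 * q1).
  by rewrite -ler_sqr ?nnegrE ?addr_ge0 ?mulr_ge0 //; nra.
nra.
Qed.

Lemma below_gmeanM u1 p1 q1 u2 p2 q2 :
  below_gmean u1 p1 q1 -> below_gmean u2 p2 q2 ->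
  below_gmean (u1 * u2) (p1 * p2) (q1 * q2).
Proof.
move=> [u1_ge0 p1_ge0 q1_ge0 le1] [u2_ge0 p2_ge0 q2_ge0 le2].
split; rewrite ?mulr_ge0 //.
by rewrite exprMn (mulrACA p1) ler_pM ?sqr_ge0.
Qed.

Inductive geomean : seq R -> seq R -> seq R -> Prop :=
| geomean_nil : geomean [::] [::] [::]
| geomean_cons c a b m l1 l2 : 0 < c -> 0 < a -> 0 < b -> c ^+ 2 = a * b ->
    geomean m l1 l2 -> geomean (c :: m) (a :: l1) (b :: l2).

Lemma geomean_posseq m l1 l2 : geomean m l1 l2 -> [/\ posseq m, posseq l1 & posseq l2].
Proof. by elim=> //= c a b {}m {}l1 {}l2 -> -> -> _ _ []. Qed.

Lemma geomean_prefix_sum m l1 l2 : geomean m l1 l2 ->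
  below_gmean (prefix_sum m) (prefix_sum l1) (prefix_sum l2).
Proof.
elim=> [|c a b {}m {}l1 {}l2 c_gt0 a_gt0 b_gt0 cab _ IH] /=.
  exact: below_gmean0.
apply: below_gmeanM; last exact: below_gmeanD below_gmean1 IH.
by apply: eq_below_gmean; rewrite ?invr_gt0 // exprVn cab invfM.
Qed.

Lemma geomean_interval_sum m l1 l2 : geomean m l1 l2 ->
  below_gmean (interval_sum m) (interval_sum l1) (interval_sum l2).
Proof.
elim=> [|c a b {}m {}l1 {}l2 c_gt0 a_gt0 b_gt0 cab g IH].
  exact: below_gmean0.
apply: below_gmeanD IH.
exact: geomean_prefix_sum (geomean_cons c_gt0 a_gt0 b_gt0 cab g).
Qed.

Lemma geomean_sum m l1 l2 : geomean m l1 l2 ->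
  below_gmean (\sum_(c <- m) c) (\sum_(a <- l1) a) (\sum_(b <- l2) b).
Proof.
elim=> [|c a b {}m {}l1 {}l2 c_gt0 a_gt0 b_gt0 cab _ IH].
  by rewrite !big_nil; exact: below_gmean0.
by rewrite !big_cons; apply: below_gmeanD IH; apply: eq_below_gmean.
Qed.

Lemma geomean_fseq m l1 l2 : geomean m l1 l2 -> below_gmean (fseq m) (fseq l1) (fseq l2).
Proof.
move=> g; apply: below_gmeanD; [exact: geomean_sum | exact: geomean_interval_sum].
Qed.

End GeometricMean.

Lemma palindrome_halves (T : Type) (s : seq T) : rev s = s ->
  exists l, s = l ++ rev l \/ exists c, s = l ++ c :: rev l.
Proof.
move=> s_pal; set k := (size s)./2; exists (take k s).
have drop_rev_take j : j + k = size s -> drop j s = rev (take k s).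
  by move=> e; rewrite -{1}s_pal drop_rev; congr (rev (take _ _)); lia.
have := odd_double_half (size s); rewrite -/k; case: odd => /= e; last first.
  by left; rewrite -(drop_rev_take k) ?cat_take_drop //; lia.
right; case e_drop: (drop k s) => [|c r].
  by have := congr1 size e_drop; rewrite size_drop /=; lia.
exists c; rewrite -(drop_rev_take k.+1); last by lia.
by rewrite -add1n -drop_drop e_drop drop1 /= -e_drop cat_take_drop.
Qed.

Section Minimizers.
Variable R : rcfType.
Implicit Types (l r s : seq R) (a : R).

Definition gmean l1 l2 := [seq Num.sqrt (x.1 * x.2) | x <- zip l1 l2].

Lemma size_gmean l1 l2 : size l1 = size l2 -> size (gmean l1 l2) = size l1.
Proof. by move=> e; rewrite size_map size_zip e minnn. Qed.

Lemma gmeanC l1 l2 : gmean l1 l2 = gmean l2 l1.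
Proof. by elim: l1 l2 => [|a l1 IH] [|b l2] //=; rewrite /gmean /= in IH *; rewrite IH mulrC. Qed.

Lemma gmean_rev s : rev (gmean s (rev s)) = gmean s (rev s).
Proof. by rewrite /gmean -map_rev rev_zip ?size_rev // revK -/(gmean _ _) gmeanC. Qed.

Lemma geomean_gmean l1 l2 : size l1 = size l2 -> posseq l1 -> posseq l2 ->
  geomean (gmean l1 l2) l1 l2.
Proof.
elim: l1 l2 => [|a l1 IH] [|b l2] //; first by move=> *; apply: geomean_nil.
move=> /= [e] /andP[a_gt0 l1_pos] /andP[b_gt0 l2_pos].
apply: (@geomean_cons _ (Num.sqrt (a * b))); rewrite ?sqrtr_gt0 ?mulr_gt0 //; last exact: IH.
by rewrite sqr_sqrtr // mulr_ge0 ?ltW.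
Qed.

Definition fseq_min s :=
  posseq s /\ forall s', size s' = size s -> posseq s' -> fseq s <= fseq s'.

Lemma geomean_gmean_rev s : posseq s -> geomean (gmean s (rev s)) s (rev s).
Proof. by move=> s_pos; apply: geomean_gmean; rewrite ?size_rev ?posseq_rev. Qed.

Lemma fseq_gmean_rev s : posseq s -> fseq (gmean s (rev s)) <= fseq s.
Proof.
move=> s_pos; have [Fm_ge0 _ _ le] := geomean_fseq (geomean_gmean_rev s_pos).
by rewrite fseq_rev -(expr2 (fseq s)) in le; rewrite -ler_sqr ?nnegrE // fseq_ge0.
Qed.

Lemma fseq_min_gmean_rev s : fseq_min s -> fseq_min (gmean s (rev s)).
Proof.
move=> [s_pos s_min]; have [m_pos _ _] := geomean_posseq (geomean_gmean_rev s_pos).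
split=> // s'; rewrite size_gmean ?size_rev // => size_s' s'_pos.
exact: le_trans (fseq_gmean_rev s_pos) (s_min _ size_s' s'_pos).
Qed.

Lemma fseq_min_stationary l a r : fseq_min (l ++ a :: r) ->
  a ^+ 2 = (1 + suffix_sum l) * (1 + prefix_sum r).
Proof.
rewrite /fseq_min posseq_cat /= => -[/and3P[l_pos a_gt0 r_pos] lar_min].
set K := (1 + suffix_sum l) * (1 + prefix_sum r).
have K_gt0 : 0 < K by rewrite mulr_gt0 // ltr_pwDl ?suffix_sum_ge0 ?prefix_sum_ge0.
set b := Num.sqrt K; have b_gt0 : 0 < b by rewrite sqrtr_gt0.
have bb : b ^+ 2 = K by rewrite sqr_sqrtr // ltW.
have := lar_min (l ++ b :: r); rewrite !size_cat /= posseq_cat /= l_pos b_gt0 r_pos.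
rewrite !fseq_insert -/K -bb (expr2 b) mulfK ?gt_eqF // => /(_ erefl isT) le.
have aV : a * a^-1 = 1 by rewrite mulfV // gt_eqF.
by suff -> : a = b; nra.
Qed.

(* Stationarity at the last coordinate b of l forces b = 2, and then the split
   l | b :: r has both sums equal to 1 again. *)
Lemma fseq_min_split l r : fseq_min (l ++ r) -> suffix_sum l = 1 -> prefix_sum r != 1.
Proof.
elim/last_ind: l r => [|l b IH] r; first by move=> _ /eqP; rewrite eq_sym oner_eq0.
rewrite cat_rcons => lbr_min Lb; apply/negP => /eqP r1.
have b_gt0 : 0 < b by case: lbr_min; rewrite posseq_cat /= => /and3P[].
have := fseq_min_stationary lbr_min; rewrite r1 => stat.
move: Lb; rewrite -cats1 suffix_sum_cat /= invprod_cons invprod_nil => Lb.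
have Lb1 : 1 + suffix_sum l = b.
  have bV : b * b^-1 = 1 by rewrite mulfV // gt_eqF.
  by move: Lb; rewrite add0r mulr1; nra.
have b2 : b = 2 by rewrite Lb1 in stat; nra.
have L1 : suffix_sum l = 1 by lra.
by move: (IH (b :: r) lbr_min L1); rewrite /= r1 b2 => /eqP; apply; field.
Qed.

Lemma fseq_min_palindrome_succ m : fseq_min m -> rev m = m ->
  exists s', [/\ size s' = (size m).+1, posseq s' & fseq s' < fseq m + 3].
Proof.
move=> m_min /palindrome_halves[l [m_eq | [c m_eq]]]; subst m;
  have [m_pos _] := m_min; move: m_pos; rewrite posseq_cat /= posseq_rev.
- case/andP=> l_pos _; set a := suffix_sum l.
  have a_neq1 : a != 1.
    by apply/negP => /eqP a1; move: (fseq_min_split m_min a1); rewrite prefix_sum_rev -/a a1 eqxx.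
  have a_ge0 : 0 <= a := suffix_sum_ge0 l_pos.
  exists (l ++ (1 + a) :: rev l); split.
  + by rewrite !size_cat /= addnS.
  + by rewrite posseq_cat /= posseq_rev l_pos ltr_pwDl.
  rewrite fseq_insert_middle // -/a.
  have : 0 < (a - 1) ^+ 2 by rewrite exprn_even_gt0 // subr_eq0.
  lra.
- case/and3P=> l_pos c_gt0 _; set a := suffix_sum l.
  have a_ge0 : 0 <= a := suffix_sum_ge0 l_pos.
  have c_eq : c = 1 + a.
    by have := fseq_min_stationary m_min; rewrite prefix_sum_rev -/a; nra.
  have a_neq1 : a != 1.
    apply/negP => /eqP a1; move: (fseq_min_split m_min a1).
    by rewrite /= prefix_sum_rev -/a -c_eq mulVf ?(gt_eqF c_gt0) // eqxx.
  exists (l ++ c :: (a + 3) / 2 :: rev l); split.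
  + by rewrite !size_cat /= addnS.
  + by rewrite posseq_cat /= posseq_rev l_pos c_gt0 divr_gt0 // ltr_wpDl.
  rewrite c_eq fseq_insert_after_middle // -/a.
  have : 0 < (a - 1) ^+ 2 / (2 * (a + 3)).
    by rewrite divr_gt0 ?exprn_even_gt0 ?subr_eq0 ?mulr_gt0 ?ltr_wpDl.
  lra.
Qed.

Lemma fseq_min_succ s : fseq_min s ->
  exists s', [/\ size s' = (size s).+1, posseq s' & fseq s' < fseq s + 3].
Proof.
move=> s_min; have [s_pos _] := s_min.
have [s' [size_s' s'_pos lt_s']] :=
  fseq_min_palindrome_succ (fseq_min_gmean_rev s_min) (gmean_rev s).
exists s'; split=> //; first by rewrite size_s' size_gmean ?size_rev.
by apply: lt_le_trans lt_s' _; rewrite lerD2r fseq_gmean_rev.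
Qed.
End Minimizers.

Section FunctionsOnOrdinals.
Variable R : realType.

Definition ord_prefix_sum n (x : 'I_n -> R) :=
  \sum_(j < n) \prod_(k < n | (k <= j)%N) (x k)^-1.

Lemma ord_prefix_sumS n (x : 'I_n.+1 -> R) :
  ord_prefix_sum x = (x ord0)^-1 * (1 + ord_prefix_sum (x \o lift ord0)).
Proof.
rewrite /ord_prefix_sum big_ord_recl mulrDr mulr1; congr (_ + _).
  by rewrite big_mkcond big_ord_recl /= big1 ?mulr1 // => k _; rewrite lift0.
rewrite mulr_sumr; apply: eq_bigr => j _.
rewrite big_mkcond big_ord_recl /=; congr (_ * _).
by rewrite [RHS]big_mkcond; apply: eq_bigr => k _; rewrite /bump !add1n ltnS.
Qed.

Lemma fS n (x : 'I_n.+1 -> R) :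
  f x = x ord0 + ord_prefix_sum x + f (x \o lift ord0).
Proof.
rewrite /f big_ord_recl [X in _ + X]big_ord_recl /=.
set S := \sum_(i < n) _; set S' := \sum_(i < n) _.
suff -> : S' = \sum_(i < n) \sum_(j < n | (i <= j)%N)
     \prod_(k < n | (i <= k <= j)%N) (x (lift ord0 k))^-1 by rewrite /ord_prefix_sum; ring.
rewrite /S'; apply: eq_bigr => i _.
rewrite big_mkcond big_ord_recl /= [RHS]big_mkcond add0r; apply: eq_bigr => j _.
rewrite /bump !add1n ltnS; case: ifP => // ij.
rewrite big_mkcond big_ord_recl /= mul1r [RHS]big_mkcond; apply: eq_bigr => k _.
by rewrite /bump !add1n !ltnS.
Qed.

Lemma codomS n (x : 'I_n.+1 -> R) : codom x = x ord0 :: codom (x \o lift ord0).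
Proof. by rewrite !codomE enum_ordSl /= -map_comp. Qed.

Lemma ord_prefix_sumE n (x : 'I_n -> R) : ord_prefix_sum x = prefix_sum (codom x).
Proof.
elim: n x => [|n IHn] x; first by rewrite /ord_prefix_sum big_ord0 codomE enum_ord0.
by rewrite ord_prefix_sumS codomS /= IHn.
Qed.

Lemma fE n (x : 'I_n -> R) : f x = fseq (codom x).
Proof.
elim: n x => [|n IHn] x.
  by rewrite /f /fseq codomE enum_ord0 big_nil /= !big_ord0 addr0.
rewrite fS IHn ord_prefix_sumE codomS /fseq big_cons /=; ring.
Qed.

Lemma eq_f n (x y : 'I_n -> R) : x =1 y -> f x = f y.
Proof. by move=> xy; rewrite !fE (eq_codom xy). Qed.

Lemma codom_nth (s : seq R) : codom (fun i : 'I_(size s) => nth 0 s i) = s.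
Proof. by rewrite codomE (map_comp (nth 0 s) val) val_enum_ord; exact: mkseq_nth. Qed.

Lemma posseq_codom n (x : 'I_n -> R) : (forall i, 0 < x i) -> posseq (codom x).
Proof. by move=> x_gt0; rewrite /posseq codomE all_map; apply/allP => i _ /=. Qed.

Lemma posseq_nth (s : seq R) : posseq s -> forall i : 'I_(size s), 0 < nth 0 s i.
Proof. by move=> /allP s_pos i; apply/s_pos/mem_nth. Qed.

End FunctionsOnOrdinals.

Section Infimum.
Variable R : realType.
Local Open Scope classical_set_scope.

Lemma A_le_fseq (s : seq R) : posseq s -> A R (size s) <= fseq s.
Proof.
move=> s_pos; have -> : fseq s = f (fun i : 'I_(size s) => nth 0 s i) by rewrite fE codom_nth.
apply: ge_inf.
  by exists 0 => _ [y y_pos <-]; rewrite fE fseq_ge0 ?posseq_codom.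
by exists (fun i => nth 0 s i) => //; exact: posseq_nth.
Qed.

Lemma f_gt_outside n (y : 'I_n -> R) (M : R) i : 0 < M -> (forall k, 0 < y k) ->
  ~~ (M^-1 <= y i <= M) -> M < f y.
Proof.
move=> M_gt0 y_pos; rewrite negb_and -!ltNge fE.
have [yi_le yVi_le] := mem_le_fseq (posseq_codom y_pos) (codom_f y i).
case/orP=> [yi_lt | /lt_le_trans]; last exact.
by apply: lt_le_trans yVi_le; rewrite -[M]invrK ltf_pV2 // posrE ?invr_gt0.
Qed.

Lemma f_continuous n (v : 'rV[R]_n) : (forall k, v ord0 k != 0) ->
  {for v, continuous (fun w : 'rV[R]_n => f (fun i => w ord0 i))}.
Proof.
move=> v_neq0; apply: continuousD.
  by apply: (cvg_big (F := nbhs v) add_continuous) => i _; exact: coord_continuous.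
apply: (cvg_big (F := nbhs v) add_continuous) => i _.
apply: (cvg_big (F := nbhs v) add_continuous) => j _.
apply: (cvg_big (F := nbhs v) mul_continuous) => k _.
by apply: continuousV => //; exact: coord_continuous.
Qed.

Lemma f_min_attained n : exists2 x : 'I_n -> R, (forall i, 0 < x i) &
  forall y : 'I_n -> R, (forall i, 0 < y i) -> f x <= f y.
Proof.
(* Outside the box [1/M, M]^n, f exceeds M > f (1, ..., 1) (lemma f_gt_outside). *)
pose M := f (fun _ : 'I_n => 1 : R) + 1.
have M_ge1 : 1 <= M by rewrite lerDr fE fseq_ge0 ?posseq_codom.
have M_gt0 : 0 < M := lt_le_trans ltr01 M_ge1.
pose B := [set v : 'rV[R]_n | forall i, `[M^-1, M]%classic (v ord0 i)].
have B_gt0 v : B v -> forall i, 0 < v ord0 i.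
  move=> Bv i; have := Bv i; rewrite /= in_itv /= => /andP[+ _].
  by apply: lt_le_trans; rewrite invr_gt0.
have B1 : B (const_mx 1) by move=> i /=; rewrite mxE in_itv /= invf_le1 ?M_ge1.
have [|||c /[1!inE] Bc c_min] := @EVT_min_rV _ _ (fun v => f (fun i => v ord0 i)) B.
- by exists (const_mx 1).
- exact: (@rV_compact _ n (fun=> `[M^-1, M]%classic) (fun=> @segment_compact R M^-1 M)).
- apply: continuous_in_subspaceT => v /[1!inE] /B_gt0 v_gt0.
  by apply: f_continuous => k; rewrite gt_eqF.
exists (fun i => c ord0 i) => [|y y_pos]; first exact: B_gt0.
case: (boolP [forall i, M^-1 <= y i <= M]) => [/forallP y_in | /forallPn[i y_out]]; last first.
  apply: le_trans (ltW (f_gt_outside M_gt0 y_pos y_out)).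
  have := c_min (const_mx 1); rewrite inE => /(_ B1) /le_trans; apply.
  by rewrite (@eq_f _ _ _ (fun=> 1)) ?lerDl // => j; rewrite mxE.
have -> : f y = f (fun i => (\row_j y j) ord0 i) by apply: eq_f => i; rewrite mxE.
by apply: c_min; rewrite inE => i /=; rewrite mxE in_itv /=; exact: y_in.
Qed.

Lemma A_min n : exists s, [/\ size s = n, fseq_min s & A R n = fseq s].
Proof.
have [x x_pos x_min] := f_min_attained n.
have size_x : size (codom x) = n by rewrite size_codom card_ord.
have x_lb : lbound [set f y | y in [set y : 'I_n -> R | forall i, 0 < y i]] (f x).
  by move=> _ [y y_pos <-]; apply: x_min.
exists (codom x); split=> //.
  split; first exact: posseq_codom.
  move=> s' size_s' s'_pos; rewrite size_x in size_s'; subst n.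
  rewrite -(fE x) -[s' in fseq s']codom_nth -fE.
  by apply: x_min; exact: posseq_nth.
apply/eqP; rewrite eq_le -{1}size_x A_le_fseq ?posseq_codom //= -(fE x).
by apply: lb_le_inf x_lb; exists (f x), x.
Qed.

End Infimum.

Theorem proposition1 (R : realType) (n : nat) :
  (1 <= n)%N -> C R n < C R n.+1.
Proof.
move=> _; have [s [<- s_min As]] := A_min R n.
have [s' [size_s' s'_pos lt_s']] := fseq_min_succ s_min.
have := A_le_fseq s'_pos; rewrite size_s' => As'.
rewrite /C -addn1 natrD; lra.
Qed.
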